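(* Let $b\ge2$ be an integer and let $\psi:\mathbb{R}\to\mathbb{R}$ be a $\mathbb{Z}$-periodic $C^1$ function which is not cohomologous to zero and satisfies $\int_0^1\psi(x)\,dx=0$. Then there exist $\gamma_1\in(0,1)$ and a positive integer $N$ such that for every $\gamma\in(\gamma_1,1)$ (with $\gamma>1/b$), $E(N,x)\ne\mathcal{A}^N\times\mathcal{A}^N$ for every $x\in\mathbb{R}$, where $E$ is computed with this $\gamma$ and $\psi$.
   Context: A $\mathbb{Z}$-periodic continuous $\psi$ is cohomologous to $0$ if there is a continuous $\mathbb{Z}$-periodic $f$ with $\psi(x)=f(bx)-f(x)$ for all $x$. $\mathcal{A}=\{0,\dots,b-1\}$. $S(x,\mathbf{i})=\sum_{n\ge1}\gamma^{n-1}\psi\big(\frac{x+i_1+i_2b+\cdots+i_nb^{n-1}}{b^n}\big)$ for $\mathbf{i}\in\mathcal{A}^{\mathbb{Z}^+}$, $S'=\partial_xS$. Sequences $\mathbf{i},\mathbf{j}$ are $(\varepsilon,\delta)$-tangent at $x_0$ if $|S(x_0,\mathbf{i})-S(x_0,\mathbf{j})|\le\varepsilon$ and $|S'(x_0,\mathbf{i})-S'(x_0,\mathbf{j})|\le\delta$. $E(q,x_0;\varepsilon,\delta)$: pairs $(\mathbf{k},\mathbf{l})\in\mathcal{A}^q\times\mathcal{A}^q$ such that some concatenations $\mathbf{ku},\mathbf{lv}$ are $(\varepsilon,\delta)$-tangent at $x_0$; $E(q,x_0)=\bigcap_{\varepsilon,\delta>0}E(q,x_0;\varepsilon,\delta)$.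 *)

From Stdlib Require Import Reals List Arith.
Open Scope R_scope.

Definition Zperiodic (f : R -> R) : Prop := forall x, f (x + 1) = f x.

Definition isC1 (f : R -> R) : Prop :=
  exists df : R -> R, (forall x, derivable_pt_lim f x (df x)) /\ continuity df.

Definition cohom_zero (b : nat) (psi : R -> R) : Prop :=
  exists f : R -> R, continuity f /\ Zperiodic f /\
    forall x, psi x = f (INR b * x) - f x.

(* sequences in A^{Z+} (A = {0,..,b-1}), indexed from 0: i 0 = i_1 *)
Definition valid_seq (b : nat) (i : nat -> nat) : Prop := forall n, (i n < b)%nat.

Definition word (b q : nat) (k : list nat) : Prop :=
  length k = q /\ Forall (fun a => (a < b)%nat) k.

Definition concat (k : list nat) (u : nat -> nat) : nat -> nat :=
  fun n => if Nat.ltb n (length k) then nth n k 0%nat else u (n - length k)%nat.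

Fixpoint digits (b : nat) (i : nat -> nat) (m : nat) : nat :=
  match m with
  | O => O
  | S m' => (digits b i m' + i m' * b ^ m')%nat
  end.

(* n-th term (0-based; corresponds to paper's index n+1) of the series S(x,i) *)
Definition Sterm (b : nat) (gamma : R) (psi : R -> R) (x : R) (i : nat -> nat)
  (n : nat) : R :=
  gamma ^ n * psi ((x + INR (digits b i (S n))) / INR b ^ (S n)).

Definition tangent (b : nat) (gamma : R) (psi : R -> R) (x0 eps delta : R)
  (i j : nat -> nat) : Prop :=
  exists (Si Sj : R -> R) (dSi dSj : R),
    (forall x, infinite_sum (Sterm b gamma psi x i) (Si x)) /\
    (forall x, infinite_sum (Sterm b gamma psi x j) (Sj x)) /\
    derivable_pt_lim Si x0 dSi /\ derivable_pt_lim Sj x0 dSj /\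
    Rabs (Si x0 - Sj x0) <= eps /\ Rabs (dSi - dSj) <= delta.

Definition E_eps (b : nat) (gamma : R) (psi : R -> R) (q : nat) (x0 eps delta : R)
  (k l : list nat) : Prop :=
  word b q k /\ word b q l /\
  exists u v, valid_seq b u /\ valid_seq b v /\
    tangent b gamma psi x0 eps delta (concat k u) (concat l v).

Definition E (b : nat) (gamma : R) (psi : R -> R) (q : nat) (x0 : R)
  (k l : list nat) : Prop :=
  forall eps delta, 0 < eps -> 0 < delta -> E_eps b gamma psi q x0 eps delta k l.

Definition E_full (b : nat) (gamma : R) (psi : R -> R) (q : nat) (x0 : R) : Prop :=
  forall k l, word b q k -> word b q l -> E b gamma psi q x0 k l.

From Pilot Require Import Defs.
From Stdlib Require Import Reals List Lra Lia Classical ZArith.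
From Coquelicot Require Import Coquelicot.
Open Scope R_scope.

(* Let K = sup |psi'| / (b - 1). For every sequence i, the derivative of S(., i) at x lies
   within K b^-N of the derivative of its N-th partial sum, which depends only on the first
   N letters of i; so if E(N, x) is full, these partial-sum derivatives differ by at most
   2 K b^-N across all words. They depend continuously on gamma, so if E(N, x) were full
   for gamma arbitrarily close to 1 (for every N), the gamma = 1 sums
   D_N(x, J) = sum_(n < N) b^-(n+1) psi'((x + J) / b^(n+1)) would vary by at most 3 K b^-N in J
   at some point x. Self-similarity of D_N, periodicity and continuity spread this bound to
   every x. Then F(x) = sum_n (psi(x / b^(n+1)) - psi 0), which satisfies
   F(b x) = psi x - psi 0 + F x, has constant increments F(x + 1) - F x (up to O(b^-N),
   they are partial sums with derivative D_N(., 1) - D_N(., 0) = O(b^-N)), hence is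
   periodic, and ∫ psi = 0 forces psi 0 = 0: psi is cohomologous to zero. *)

(** * Finite sums and geometric tails *)

(* [psum f n] sums the first [n] terms, whereas [sum_f_R0 f n] sums [n + 1]. *)
Fixpoint psum (f : nat -> R) (n : nat) : R :=
  match n with O => 0 | S n' => psum f n' + f n' end.

Lemma sum_f_R0_psum f m : sum_f_R0 f m = psum f (S m).
Proof. induction m as [|m IH]; simpl in *; [lra | rewrite IH; simpl; lra]. Qed.

Lemma psum_ext f g N : (forall n, (n < N)%nat -> f n = g n) -> psum f N = psum g N.
Proof.
  induction N as [|N IH]; intros H; simpl; auto.
  rewrite IH by (intros; apply H; lia). rewrite (H N) by lia; auto.
Qed.

Lemma psum_minus f g N : psum (fun n => f n - g n) N = psum f N - psum g N.
Proof. induction N as [|N IH]; simpl; [lra | rewrite IH; lra]. Qed.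

Lemma Rabs_psum_le f c N :
  (forall n, (n < N)%nat -> Rabs (f n) <= c) -> Rabs (psum f N) <= INR N * c.
Proof.
  induction N as [|N IH]; intros H; cbn [psum].
  - rewrite Rabs_R0; simpl; lra.
  - rewrite S_INR. eapply Rle_trans; [apply Rabs_triang|].
    assert (H1 := IH (fun n h => H n ltac:(lia))). assert (H2 := H N ltac:(lia)). lra.
Qed.

Section GeometricTails.

Variables (t : nat -> R) (bb C : R).
Hypothesis hbb : 1 < bb.
Hypothesis ht : forall n, Rabs (t n) <= C / bb ^ S n.

Lemma psum_tail_le N k :
  Rabs (psum t (N + k) - psum t N) <= C / (bb - 1) * (/ bb ^ N - / bb ^ (N + k)).
Proof.
  induction k as [|k IH].
  - rewrite Nat.add_0_r, !Rminus_diag, Rabs_R0; lra.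
  - rewrite Nat.add_succ_r. cbn [psum].
    replace (psum t (N + k) + t (N + k)%nat - psum t N)
      with ((psum t (N + k) - psum t N) + t (N + k)%nat) by ring.
    eapply Rle_trans; [apply Rabs_triang|].
    assert (Hp : 0 < bb ^ (N + k)) by (apply pow_lt; lra).
    assert (HN : bb ^ N <> 0) by (apply pow_nonzero; lra).
    specialize (ht (N + k)%nat). simpl pow in ht |- *.
    replace (C / (bb - 1) * (/ bb ^ N - / (bb * bb ^ (N + k)))) with
      (C / (bb - 1) * (/ bb ^ N - / bb ^ (N + k)) + C / (bb * bb ^ (N + k)))
      by (field; repeat split; lra).
    lra.
Qed.

Lemma psum_tail_le_geom N m :
  (N <= m)%nat -> Rabs (psum t m - psum t N) <= C / (bb - 1) / bb ^ N.
Proof.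
  intros Hm. replace m with (N + (m - N))%nat by lia.
  eapply Rle_trans; [apply psum_tail_le|].
  assert (HC : 0 <= C).
  { specialize (ht 0%nat). assert (0 < bb ^ 1) by (apply pow_lt; lra).
    assert (0 <= C / bb ^ 1) by (eapply Rle_trans; [apply Rabs_pos | exact ht]).
    apply Rmult_le_reg_r with (/ bb ^ 1); [apply Rinv_0_lt_compat|]; lra. }
  assert (0 < / bb ^ (N + (m - N))) by (apply Rinv_0_lt_compat, pow_lt; lra).
  assert (0 <= C / (bb - 1)) by (apply Rdiv_le_0_compat; lra).
  unfold Rdiv at 2. apply Rmult_le_compat_l; lra.
Qed.

Lemma infinite_sum_tail_le l N :
  infinite_sum t l -> Rabs (l - psum t N) <= C / (bb - 1) / bb ^ N.
Proof.
  intros Hs. apply Rle_plus_epsilon. intros eps Heps.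
  destruct (Hs eps Heps) as [N1 HN1].
  set (m := Nat.max N1 N).
  specialize (HN1 m ltac:(lia)). unfold R_dist in HN1. rewrite sum_f_R0_psum in HN1.
  assert (Ht := psum_tail_le_geom N (S m) ltac:(lia)).
  replace (l - psum t N) with ((psum t (S m) - psum t N) - (psum t (S m) - l)) by ring.
  eapply Rle_trans; [apply Rabs_triang|]. rewrite Rabs_Ropp. lra.
Qed.

End GeometricTails.

Lemma exists_inv_pow_lt bb eps : 1 < bb -> 0 < eps -> exists m, / bb ^ m < eps.
Proof.
  intros Hb Heps.
  assert (Hib : Rabs (/ bb) < 1).
  { rewrite Rabs_pos_eq by (left; apply Rinv_0_lt_compat; lra).
    rewrite <- Rinv_1. apply Rinv_lt_contravar; lra. }
  destruct (pow_lt_1_zero _ Hib eps Heps) as [m Hm]. exists m.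
  specialize (Hm m (le_n m)). rewrite pow_inv, Rabs_pos_eq in Hm; auto.
  left. apply Rinv_0_lt_compat, pow_lt. lra.
Qed.

Lemma eq_0_of_le_geom r A bb :
  1 < bb -> (forall N, Rabs r <= A / bb ^ N) -> r = 0.
Proof.
  intros Hb H. destruct (Req_dec r 0) as [|Hne]; auto. exfalso.
  assert (Hr : 0 < Rabs r) by (apply Rabs_pos_lt; auto).
  assert (HA : 0 <= A) by (specialize (H 0%nat); simpl in H; lra).
  destruct (exists_inv_pow_lt bb (Rabs r / (A + 1)) Hb ltac:(apply Rdiv_lt_0_compat; lra))
    as [N HN].
  specialize (H N).
  assert (A / bb ^ N <= A * (Rabs r / (A + 1)))
    by (unfold Rdiv at 1; apply Rmult_le_compat_l; lra).
  assert (A * (Rabs r / (A + 1)) < Rabs r).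
  { apply Rmult_lt_reg_r with (A + 1); [lra|].
    unfold Rdiv. rewrite Rmult_assoc, Rmult_assoc, Rinv_l by lra. nra. }
  lra.
Qed.

(** * Real analysis *)

Lemma Rabs_sub_le_of_deriv_le f f' L :
  (forall z, derivable_pt_lim f z (f' z)) -> (forall z, Rabs (f' z) <= L) ->
  forall u v, Rabs (f u - f v) <= L * Rabs (u - v).
Proof.
  intros Hd Hb u v.
  destruct (Rtotal_order u v) as [Huv|[<-|Huv]].
  - destruct (MVT_cor2 f f' u v Huv (fun c _ => Hd c)) as [c [Hc _]].
    rewrite Rabs_minus_sym, Hc, (Rabs_minus_sym u v), Rabs_mult.
    apply Rmult_le_compat_r; [apply Rabs_pos | apply Hb].
  - rewrite !Rminus_diag, Rabs_R0; lra.
  - destruct (MVT_cor2 f f' v u Huv (fun c _ => Hd c)) as [c [Hc _]].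
    rewrite Hc, Rabs_mult.
    apply Rmult_le_compat_r; [apply Rabs_pos | apply Hb].
Qed.

Lemma Rabs_deriv_le_of_lipschitz f x l L :
  derivable_pt_lim f x l -> (forall h, Rabs (f (x + h) - f x) <= L * Rabs h) ->
  Rabs l <= L.
Proof.
  intros Hd Hl. destruct (Rle_or_lt (Rabs l) L) as [|Hlt]; auto. exfalso.
  destruct (Hd (Rabs l - L) ltac:(lra)) as [del Hdel].
  assert (Hdp := cond_pos del).
  set (h := del / 2).
  assert (Hh0 : h <> 0) by (unfold h; lra).
  assert (Hhd : Rabs h < del) by (unfold h; rewrite Rabs_pos_eq; lra).
  specialize (Hdel h Hh0 Hhd). specialize (Hl h).
  assert (Hq : Rabs ((f (x + h) - f x) / h) <= L).
  { unfold Rdiv. rewrite Rabs_mult, Rabs_inv.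
    assert (0 < Rabs h) by (apply Rabs_pos_lt; auto).
    apply Rmult_le_reg_r with (Rabs h); auto.
    rewrite Rmult_assoc, Rinv_l by lra. lra. }
  assert (Rabs l <= Rabs ((f (x + h) - f x) / h) + Rabs ((f (x + h) - f x) / h - l)).
  { replace l with ((f (x + h) - f x) / h - ((f (x + h) - f x) / h - l)) at 1 by ring.
    eapply Rle_trans; [apply Rabs_triang|]. rewrite Rabs_Ropp. lra. }
  lra.
Qed.

Lemma lipschitz_continuity f L :
  0 <= L -> (forall x y, Rabs (f x - f y) <= L * Rabs (x - y)) -> continuity f.
Proof.
  intros HL H x eps Heps.
  exists (eps / (L + 1)). split; [apply Rdiv_lt_0_compat; lra|].
  intros y [_ Hy]. unfold R_dist in *; simpl in *. unfold R_dist in *.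
  eapply Rle_lt_trans; [apply H|].
  assert (L * Rabs (y - x) <= L * (eps / (L + 1))) by (apply Rmult_le_compat_l; lra).
  assert (L * (eps / (L + 1)) < eps).
  { apply Rmult_lt_reg_r with (L + 1); [lra|].
    unfold Rdiv. rewrite Rmult_assoc, Rmult_assoc, Rinv_l by lra. nra. }
  lra.
Qed.

Lemma Rabs_le_of_approx f x B : continuity_pt f x ->
  (forall eps, 0 < eps -> exists z, Rabs (z - x) < eps /\ Rabs (f z) <= B) ->
  Rabs (f x) <= B.
Proof.
  intros Hc H. apply Rle_plus_epsilon. intros eps Heps.
  destruct (Hc eps Heps) as [alp [Halp Hz]].
  destruct (H alp Halp) as [z [Hz1 Hz2]].
  destruct (Req_dec z x) as [<-|Hne]; [lra|].
  assert (R_dist (f z) (f x) < eps) by (apply Hz; split; [split; [exact I | auto] | exact Hz1]).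
  unfold R_dist in *.
  replace (f x) with (f z - (f z - f x)) by ring.
  eapply Rle_trans; [apply Rabs_triang|]. rewrite Rabs_Ropp. lra.
Qed.

Lemma exists_nat_ceil t : 0 <= t -> exists j : nat, t <= INR j <= t + 1.
Proof.
  intros Ht. destruct (archimed t) as [H1 H2].
  assert (0 <= up t)%Z by (apply le_IZR; lra).
  exists (Z.to_nat (up t)). rewrite INR_IZR_INZ, Z2Nat.id by auto. lra.
Qed.

Lemma exists_nat_lattice_close x' x c : 0 < c ->
  exists j p : nat, Rabs ((x' + INR j) / c - INR p - x) <= / c.
Proof.
  intros Hc.
  destruct (exists_nat_ceil (Rabs (x' / c - x)) (Rabs_pos _)) as [p [Hp _]].
  assert (Ht : 0 <= (x + INR p) * c - x').
  { assert (x' / c - x <= INR p) by (eapply Rle_trans; [apply RRle_abs | exact Hp]).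
    assert (x' <= (x + INR p) * c).
    { replace x' with (x' / c * c) by (field; lra). nra. }
    lra. }
  destruct (exists_nat_ceil _ Ht) as [j [Hj1 Hj2]].
  exists j, p.
  replace ((x' + INR j) / c - INR p - x) with ((INR j - ((x + INR p) * c - x')) / c)
    by (field; lra).
  rewrite Rabs_pos_eq by (apply Rdiv_le_0_compat; lra).
  unfold Rdiv. rewrite <- (Rmult_1_l (/ c)) at 2.
  apply Rmult_le_compat_r; [left; apply Rinv_0_lt_compat|]; lra.
Qed.

(** * Periodic functions *)

Lemma periodic_shift_nat f : Zperiodic f -> forall x q, f (x + INR q) = f x.
Proof.
  intros H x q. induction q as [|q IH]; [simpl; rewrite Rplus_0_r; auto|].
  rewrite S_INR, <- Rplus_assoc, H; auto.
Qed.

Lemma periodic_shift_Z f : Zperiodic f -> forall x k, f (x + IZR k) = f x.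
Proof.
  intros H x k. destruct (Z_le_gt_dec 0 k) as [Hk|Hk].
  - rewrite <- (Z2Nat.id k Hk), <- INR_IZR_INZ. apply periodic_shift_nat; auto.
  - replace k with (- Z.of_nat (Z.to_nat (- k)))%Z by lia.
    rewrite opp_IZR, <- INR_IZR_INZ.
    rewrite <- (periodic_shift_nat f H (x + - INR (Z.to_nat (- k))) (Z.to_nat (- k))).
    f_equal. ring.
Qed.

Lemma deriv_periodic psi df : Zperiodic psi ->
  (forall x, derivable_pt_lim psi x (df x)) -> Zperiodic df.
Proof.
  intros Hp Hd x.
  assert (H1 : derivable_pt_lim (fun z => psi (z + 1)) x (df (x + 1) * 1)).
  { apply (derivable_pt_lim_comp (fun z => z + 1) psi); [|apply Hd].
    apply is_derive_Reals. auto_derive; auto. }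
  rewrite Rmult_1_r in H1.
  apply (uniqueness_limite psi x); [|apply Hd].
  intros eps Heps. destruct (H1 eps Heps) as [del Hdel]. exists del.
  intros h Hh Hhd. rewrite <- (Hp (x + h)), <- (Hp x).
  apply Hdel; auto.
Qed.

Lemma periodic_continuous_bounded f : Zperiodic f -> continuity f ->
  exists M, 0 < M /\ forall x, Rabs (f x) <= M.
Proof.
  intros Hp Hc.
  destruct (continuity_ab_maj (fun x => Rabs (f x)) 0 1 ltac:(lra)) as [Mx [HMx _]].
  { intros c _. exact (continuity_pt_comp f Rabs c (Hc c) (Rcontinuity_abs _)). }
  exists (Rabs (f Mx) + 1). split; [assert (0 <= Rabs (f Mx)) by apply Rabs_pos; lra|].
  intros x. destruct (archimed x) as [A1 A2].
  set (z := x - IZR (up x - 1)).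
  assert (Hz : f x = f z).
  { unfold z. rewrite <- (periodic_shift_Z f Hp (x - IZR (up x - 1)) (up x - 1)).
    f_equal; ring. }
  rewrite Hz. assert (Hz01 : 0 <= z <= 1) by (unfold z; rewrite minus_IZR; simpl; lra).
  specialize (HMx z Hz01). simpl in HMx. lra.
Qed.

Lemma ex_RInt_of_continuous (f : R -> R) a b : (forall z, continuous f z) -> ex_RInt f a b.
Proof. intros H. exact (ex_RInt_continuous f a b (fun z _ => H z)). Qed.

Section PeriodicIntegral.

Variable F : R -> R.
Hypothesis hcont : forall z, continuous F z.
Hypothesis hper : Zperiodic F.

Lemma RInt_periodic_nat n : RInt F 0 (INR n) = INR n * RInt F 0 1.
Proof.
  induction n as [|n IH].
  - simpl INR. rewrite Rmult_0_l. exact (RInt_point 0 F).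
  - rewrite S_INR, <- (RInt_Chasles F 0 (INR n) (INR n + 1)) by (apply ex_RInt_of_continuous; auto).
    change (plus ?a ?b) with (a + b). rewrite IH.
    assert (Hl := RInt_comp_lin F 1 (INR n) 0 1 (ex_RInt_of_continuous F _ _ hcont)).
    replace (1 * 0 + INR n) with (INR n) in Hl by ring.
    replace (1 * 1 + INR n) with (INR n + 1) in Hl by ring.
    rewrite <- Hl, (RInt_ext (fun y => scal 1 (F (1 * y + INR n))) F); [lra|].
    intros y _. change (scal 1 (F (1 * y + INR n))) with (1 * F (1 * y + INR n)).
    rewrite !Rmult_1_l. apply periodic_shift_nat; auto.
Qed.

Lemma RInt_periodic_dilate (b : nat) : (0 < b)%nat ->
  RInt (fun y => F (INR b * y)) 0 1 = RInt F 0 1.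
Proof.
  intros Hb. assert (Hbp : 0 < INR b) by (apply lt_0_INR; auto).
  assert (Hl := RInt_comp_lin F (INR b) 0 0 1 (ex_RInt_of_continuous F _ _ hcont)).
  assert (Hc : forall z, continuous (fun y => F (INR b * y + 0)) z).
  { intros z. apply (continuous_comp (fun y => INR b * y + 0) F); [|apply hcont].
    assert (Hx : ex_derive (fun y => INR b * y + 0) z) by (auto_derive; auto).
    exact (ex_derive_continuous _ _ Hx). }
  rewrite RInt_scal in Hl by (apply ex_RInt_of_continuous; auto).
  replace (INR b * 0 + 0) with 0 in Hl by ring.
  replace (INR b * 1 + 0) with (INR b) in Hl by ring.
  rewrite RInt_periodic_nat in Hl.
  change (scal (INR b) ?a) with (INR b * a) in Hl.
  rewrite (RInt_ext (fun y => F (INR b * y + 0)) (fun y => F (INR b * y))) in Hl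
    by (intros; rewrite Rplus_0_r; auto).
  apply Rmult_eq_reg_l with (INR b); lra.
Qed.

End PeriodicIntegral.

(** * Partial sums of S and their derivatives *)

Lemma pow_unit_interval g n : 0 <= g <= 1 -> 0 <= g ^ n <= 1.
Proof. intros H. induction n; simpl; nra. Qed.

Lemma one_sub_pow_le g n : 0 <= g <= 1 -> 1 - g ^ n <= INR n * (1 - g).
Proof.
  intros Hg. induction n as [|n IH]; [simpl; lra|].
  rewrite S_INR. simpl. destruct (pow_unit_interval g n Hg). nra.
Qed.

Lemma INR_gt_1 b : (2 <= b)%nat -> 1 < INR b.
Proof. intros H. apply (le_INR 2) in H. simpl in H. lra. Qed.

Definition S_partial (b : nat) (psi : R -> R) (g : R) (N : nat) (e : nat -> R) (x : R) : R :=
  psum (fun n => g ^ n * psi ((x + e n) / INR b ^ S n)) N.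

Definition dS_partial (b : nat) (df : R -> R) (g : R) (N : nat) (e : nat -> R) (x : R) : R :=
  psum (fun n => g ^ n / INR b ^ S n * df ((x + e n) / INR b ^ S n)) N.

(* The derivative of the [N]-th partial sum of [S(x, k u)], where the base-[b] digits of
   [J] spell [k]: by periodicity of [df] the offsets [digits (k u) (n + 1) = J mod b^(n+1)]
   may be replaced by [J] itself. *)
Definition dS_word (b : nat) (df : R -> R) (g : R) (N : nat) (x : R) (J : nat) : R :=
  dS_partial b df g N (fun _ => INR J) x.

Definition flat_at (b : nat) (df : R -> R) (C : R) (N : nat) (x : R) : Prop :=
  forall J J', Rabs (dS_word b df 1 N x J - dS_word b df 1 N x J') <= C / INR b ^ N.

Lemma flat_at_O b df C x : 0 <= C -> flat_at b df C 0 x.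
Proof. intros HC J J'. cbn. rewrite Rminus_0_r, Rabs_R0, Rdiv_1_r. exact HC. Qed.

Definition word_of (b N J : nat) : list nat := map (fun i => (J / b ^ i) mod b)%nat (seq 0 N).

Lemma word_of_word b N J : (0 < b)%nat -> word b N (word_of b N J).
Proof.
  intros Hb. split.
  - unfold word_of; rewrite length_map, length_seq; auto.
  - apply Forall_forall. intros a Ha. apply in_map_iff in Ha.
    destruct Ha as [i [<- _]]. apply Nat.mod_upper_bound; lia.
Qed.

Lemma digits_concat_word_of b N J u m : (0 < b)%nat -> (m <= N)%nat ->
  digits b (Defs.concat (word_of b N J) u) m = (J mod b ^ m)%nat.
Proof.
  intros Hb. induction m as [|m IH]; intros Hm.
  - cbn [digits]. rewrite Nat.pow_0_r, Nat.mod_1_r. auto.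
  - cbn [digits]. rewrite IH by lia.
    unfold Defs.concat. assert (Hl : length (word_of b N J) = N)
      by (unfold word_of; rewrite length_map, length_seq; auto).
    rewrite Hl. replace (Nat.ltb m N) with true by (symmetry; apply Nat.ltb_lt; lia).
    unfold word_of.
    rewrite (nth_indep _ 0%nat ((fun i => (J / b ^ i) mod b)%nat 0%nat))
      by (rewrite length_map, length_seq; lia).
    rewrite (map_nth (fun i => (J / b ^ i) mod b)%nat (seq 0 N) 0%nat m), seq_nth by lia.
    simpl (0 + m)%nat.
    rewrite Nat.pow_succ_r', (Nat.mul_comm b), Nat.Div0.mod_mul_r. lia.
Qed.

Section PartialSums.

Variables (b : nat) (psi df : R -> R).
Hypothesis hb : (2 <= b)%nat.
Hypothesis hper : Zperiodic psi.
Hypothesis hder : forall x, derivable_pt_lim psi x (df x).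
Hypothesis hdcont : continuity df.

Lemma S_partial_deriv g N e x :
  derivable_pt_lim (S_partial b psi g N e) x (dS_partial b df g N e x).
Proof.
  assert (H1 := INR_gt_1 b hb).
  apply is_derive_Reals. unfold S_partial, dS_partial. induction N as [|N IH]; cbn [psum].
  - auto_derive; auto.
  - apply (is_derive_plus _ _ x _ _ IH).
    assert (Hbp : INR b ^ S N <> 0) by (apply pow_nonzero; lra).
    assert (Hi : is_derive (fun x => (x + e N) / INR b ^ S N) x (/ INR b ^ S N))
      by (auto_derive; auto; simpl pow; ring).
    assert (Hc := is_derive_comp psi _ x _ _ (proj2 (is_derive_Reals _ _ _) (hder _)) Hi).
    assert (Hs := is_derive_scal _ x (g ^ N) _ Hc).
    replace (g ^ N / INR b ^ S N * df ((x + e N) / INR b ^ S N)) with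
      (g ^ N * scal (/ INR b ^ S N) (df ((x + e N) / INR b ^ S N)))
      by (unfold scal; simpl; unfold mult; simpl; unfold Rdiv; ring).
    exact Hs.
Qed.

Lemma dS_word_add_mul g N x J q :
  dS_word b df g N x (J + b ^ N * q) = dS_word b df g N x J.
Proof.
  assert (H1 := INR_gt_1 b hb).
  unfold dS_word, dS_partial; apply psum_ext; intros n Hn. f_equal.
  rewrite plus_INR, mult_INR, pow_INR.
  replace ((x + (INR J + INR b ^ N * INR q)) / INR b ^ S n)
    with ((x + INR J) / INR b ^ S n + INR (b ^ (N - S n) * q)).
  - apply periodic_shift_nat, (deriv_periodic psi); auto.
  - assert (Hpw : INR b ^ N = INR b ^ S n * INR b ^ (N - S n))
      by (rewrite <- pow_add; f_equal; lia).
    rewrite mult_INR, pow_INR, Hpw. field. apply pow_nonzero; lra.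
Qed.

Lemma dS_word_shift g N x J : dS_word b df g N (x + 1) J = dS_word b df g N x (S J).
Proof.
  unfold dS_word, dS_partial; apply psum_ext; intros n Hn. rewrite S_INR.
  replace (x + 1 + INR J) with (x + (INR J + 1)) by ring. auto.
Qed.

(* Self-similarity: the first [m] digits of a word of length [m + N] only rescale [x]
   for the remaining [N]. *)
Lemma dS_word_split g m N x j J :
  dS_word b df g (m + N) x (j + b ^ m * J) =
  dS_word b df g m x j + g ^ m / INR b ^ m * dS_word b df g N ((x + INR j) / INR b ^ m) J.
Proof.
  assert (H1 := INR_gt_1 b hb).
  induction N as [|N IH].
  - rewrite Nat.add_0_r, dS_word_add_mul.
    change (dS_word b df g 0 ((x + INR j) / INR b ^ m) J) with 0. ring.
  - rewrite Nat.add_succ_r. unfold dS_word, dS_partial in *; cbn [psum]. rewrite IH.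
    replace (S (m + N)) with (m + S N)%nat by lia.
    replace ((x + INR (j + b ^ m * J)) / INR b ^ (m + S N))
      with (((x + INR j) / INR b ^ m + INR J) / INR b ^ S N).
    + rewrite !pow_add. field. split; apply pow_nonzero; lra.
    + rewrite plus_INR, mult_INR, pow_INR, pow_add. field. split; apply pow_nonzero; lra.
Qed.

Lemma dS_word_continuous g N J x0 : continuous (fun x => dS_word b df g N x J) x0.
Proof.
  assert (H1 := INR_gt_1 b hb).
  unfold dS_word, dS_partial. induction N as [|N IH]; cbn [psum].
  - apply continuous_const.
  - apply (continuous_plus _ _ x0 IH).
    assert (Hc : continuous (fun x => df ((x + INR J) / INR b ^ S N)) x0).
    { apply (continuous_comp (fun x => (x + INR J) / INR b ^ S N) df).
      - assert (Hx : ex_derive (fun x => (x + INR J) / INR b ^ S N) x0) by (auto_derive; auto).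
        exact (ex_derive_continuous _ _ Hx).
      - apply continuity_pt_filterlim, hdcont. }
    exact (continuous_mult (fun _ => g ^ N / INR b ^ S N) _ x0 (continuous_const _ x0) Hc).
Qed.

Lemma dS_partial_word_of g N J u x :
  dS_partial b df g N (fun n => INR (digits b (Defs.concat (word_of b N J) u) (S n))) x =
  dS_word b df g N x J.
Proof.
  assert (H1 := INR_gt_1 b hb).
  unfold dS_word, dS_partial; apply psum_ext; intros n Hn.
  rewrite digits_concat_word_of by lia. f_equal.
  assert (b ^ S n <> 0)%nat by (apply Nat.pow_nonzero; lia).
  rewrite (Nat.div_mod J (b ^ S n)) at 2 by auto.
  rewrite plus_INR, mult_INR, pow_INR.
  replace ((x + (INR b ^ S n * INR (J / b ^ S n) + INR (J mod b ^ S n))) / INR b ^ S n)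
    with ((x + INR (J mod b ^ S n)) / INR b ^ S n + INR (J / b ^ S n))
    by (field; apply pow_nonzero; lra).
  symmetry. apply periodic_shift_nat, (deriv_periodic psi); auto.
Qed.

End PartialSums.

(** * From full E(N, x) to flat derivatives *)

Lemma infinite_sum_minus f g lf lg : infinite_sum f lf -> infinite_sum g lg ->
  infinite_sum (fun n => f n - g n) (lf - lg).
Proof.
  intros H1 H2. apply is_series_Reals. apply is_series_Reals in H1, H2.
  exact (is_series_minus f g lf lg H1 H2).
Qed.

Section BoundedDerivative.

Variables (b : nat) (psi df : R -> R) (M : R).
Hypothesis hb : (2 <= b)%nat.
Hypothesis hper : Zperiodic psi.
Hypothesis hder : forall x, derivable_pt_lim psi x (df x).
Hypothesis hM : forall x, Rabs (df x) <= M.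

Lemma Rabs_psi_rescaled_sub_le x y e n :
  Rabs (psi ((x + e) / INR b ^ S n) - psi ((y + e) / INR b ^ S n)) <=
  M * Rabs (x - y) / INR b ^ S n.
Proof.
  assert (Hbp : 0 < INR b ^ S n) by (apply pow_lt; generalize (INR_gt_1 b hb); lra).
  eapply Rle_trans; [apply (Rabs_sub_le_of_deriv_le psi df M hder hM)|].
  replace ((x + e) / INR b ^ S n - (y + e) / INR b ^ S n) with ((x - y) * / INR b ^ S n)
    by (field; lra).
  rewrite Rabs_mult, (Rabs_pos_eq (/ INR b ^ S n)) by (left; apply Rinv_0_lt_compat; lra).
  right. unfold Rdiv. ring.
Qed.

(* The tail of [S(., i)] beyond [N] terms is [M / (b - 1) / b ^ N]-Lipschitz, so its
   derivative is bounded by the same constant. *)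
Lemma Rabs_deriv_sub_dS_partial_le g N x0 i (Si : R -> R) dSi : 0 <= g <= 1 ->
  (forall x, infinite_sum (Sterm b g psi x i) (Si x)) -> derivable_pt_lim Si x0 dSi ->
  Rabs (dSi - dS_partial b df g N (fun n => INR (digits b i (S n))) x0) <=
  M / (INR b - 1) / INR b ^ N.
Proof.
  intros Hg Hs Hdi. assert (H1 := INR_gt_1 b hb).
  set (e := fun n => INR (digits b i (S n))).
  apply (Rabs_deriv_le_of_lipschitz (fun y => Si y - S_partial b psi g N e y) x0).
  { apply derivable_pt_lim_minus; [exact Hdi | apply (S_partial_deriv b psi df); auto]. }
  intros h.
  set (t := fun n => Sterm b g psi (x0 + h) i n - Sterm b g psi x0 i n).
  assert (Ht : forall n, Rabs (t n) <= M * Rabs h / INR b ^ S n).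
  { intros n. unfold t, Sterm. destruct (pow_unit_interval g n Hg).
    rewrite <- Rmult_minus_distr_l, Rabs_mult, (Rabs_pos_eq (g ^ n)) by auto.
    assert (Hl := Rabs_psi_rescaled_sub_le (x0 + h) x0 (INR (digits b i (S n))) n).
    replace (x0 + h - x0) with h in Hl by ring.
    assert (0 <= Rabs (psi ((x0 + h + INR (digits b i (S n))) / INR b ^ S n) -
                       psi ((x0 + INR (digits b i (S n))) / INR b ^ S n))) by apply Rabs_pos.
    nra. }
  assert (Htail := infinite_sum_tail_le t (INR b) (M * Rabs h) H1 Ht
                     (Si (x0 + h) - Si x0) N (infinite_sum_minus _ _ _ _ (Hs _) (Hs _))).
  assert (Hpt : psum t N = S_partial b psi g N e (x0 + h) - S_partial b psi g N e x0)
    by (unfold t; rewrite psum_minus; auto).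
  rewrite Hpt in Htail.
  replace (M / (INR b - 1) / INR b ^ N * Rabs h) with (M * Rabs h / (INR b - 1) / INR b ^ N)
    by (assert (INR b ^ N <> 0) by (apply pow_nonzero; lra); field; split; lra).
  replace (Si (x0 + h) - S_partial b psi g N e (x0 + h) - (Si x0 - S_partial b psi g N e x0))
    with (Si (x0 + h) - Si x0 - (S_partial b psi g N e (x0 + h) - S_partial b psi g N e x0))
    by ring.
  exact Htail.
Qed.

Lemma E_full_dS_word_close g N x J J' : 0 <= g <= 1 -> E_full b g psi N x ->
  Rabs (dS_word b df g N x J - dS_word b df g N x J') <= 2 * (M / (INR b - 1) / INR b ^ N).
Proof.
  intros Hg HE. apply Rle_plus_epsilon. intros del Hdel.
  destruct (HE (word_of b N J) (word_of b N J') (word_of_word b N J ltac:(lia))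
              (word_of_word b N J' ltac:(lia)) 1 del Rlt_0_1 Hdel)
    as [_ [_ [u [v [_ [_ [Si [Sj [dSi [dSj [HSi [HSj [HdSi [HdSj [_ Hdd]]]]]]]]]]]]]]].
  assert (H1 := Rabs_deriv_sub_dS_partial_le g N x _ Si dSi Hg HSi HdSi).
  assert (H2 := Rabs_deriv_sub_dS_partial_le g N x _ Sj dSj Hg HSj HdSj).
  rewrite (dS_partial_word_of b psi) in H1, H2 by auto.
  replace (dS_word b df g N x J - dS_word b df g N x J') with
    (- (dSi - dS_word b df g N x J) + (dSi - dSj) + (dSj - dS_word b df g N x J')) by ring.
  eapply Rle_trans; [apply Rabs_triang|].
  eapply Rle_trans; [apply Rplus_le_compat_r, Rabs_triang|].
  rewrite Rabs_Ropp. lra.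
Qed.

Lemma dS_word_sub_gamma_1_le g N x J : 0 <= g <= 1 ->
  Rabs (dS_word b df g N x J - dS_word b df 1 N x J) <= INR N * (INR N * (1 - g) * M).
Proof.
  intros Hg. assert (H1 := INR_gt_1 b hb).
  unfold dS_word, dS_partial. rewrite <- psum_minus. apply Rabs_psum_le. intros n Hn.
  rewrite pow1.
  set (d := df ((x + INR J) / INR b ^ S n)).
  assert (Hbp : 1 <= INR b ^ S n) by (apply pow_R1_Rle; lra).
  replace (g ^ n / INR b ^ S n * d - 1 / INR b ^ S n * d)
    with (- (1 - g ^ n) * / INR b ^ S n * d) by (unfold Rdiv; ring).
  destruct (pow_unit_interval g n Hg).
  rewrite !Rabs_mult, Rabs_Ropp, (Rabs_pos_eq (1 - g ^ n)) by lra.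
  rewrite (Rabs_pos_eq (/ INR b ^ S n)) by (left; apply Rinv_0_lt_compat; lra).
  assert (/ INR b ^ S n <= 1) by (rewrite <- Rinv_1; apply Rinv_le_contravar; lra).
  assert (0 < / INR b ^ S n) by (apply Rinv_0_lt_compat; lra).
  assert (Hd := hM ((x + INR J) / INR b ^ S n)). fold d in Hd.
  assert (0 <= Rabs d) by apply Rabs_pos.
  assert (Hn1 := one_sub_pow_le g n Hg).
  assert (INR n <= INR N) by (apply le_INR; lia).
  assert (INR n * (1 - g) <= INR N * (1 - g)) by nra.
  assert ((1 - g ^ n) * / INR b ^ S n <= INR N * (1 - g)) by nra.
  assert (0 <= (1 - g ^ n) * / INR b ^ S n) by nra.
  nra.
Qed.

Lemma E_full_flat_at g N x : 0 <= g <= 1 -> E_full b g psi N x ->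
  2 * (INR N * INR N * M) * (1 - g) <= M / (INR b - 1) / INR b ^ N ->
  flat_at b df (3 * (M / (INR b - 1))) N x.
Proof.
  intros Hg HE Hclose J J'.
  assert (H1 := INR_gt_1 b hb). assert (HbN : 0 < INR b ^ N) by (apply pow_lt; lra).
  assert (B1 := E_full_dS_word_close g N x J J' Hg HE).
  assert (B2 := dS_word_sub_gamma_1_le g N x J Hg).
  assert (B3 := dS_word_sub_gamma_1_le g N x J' Hg).
  replace (dS_word b df 1 N x J - dS_word b df 1 N x J') with
    ((dS_word b df g N x J - dS_word b df g N x J') - (dS_word b df g N x J - dS_word b df 1 N x J)
     + (dS_word b df g N x J' - dS_word b df 1 N x J')) by ring.
  eapply Rle_trans; [apply Rabs_triang|].
  eapply Rle_trans; [apply Rplus_le_compat_r, Rabs_triang|].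
  rewrite Rabs_Ropp.
  replace (3 * (M / (INR b - 1)) / INR b ^ N) with (3 * (M / (INR b - 1) / INR b ^ N))
    by (field; lra).
  lra.
Qed.

Lemma flat_at_of_E_full_near_one N : 0 < M ->
  (forall g1, g1 < 1 -> exists g x, g1 < g < 1 /\ E_full b g psi N x) ->
  exists x, flat_at b df (3 * (M / (INR b - 1))) N x.
Proof.
  intros HM0 H. assert (H1 := INR_gt_1 b hb). assert (HbN : 0 < INR b ^ N) by (apply pow_lt; lra).
  set (A := 2 * (INR N * INR N * M)).
  assert (HA : 0 <= A) by (unfold A; generalize (pos_INR N); nra).
  set (Q := M / (INR b - 1) / INR b ^ N).
  assert (HQ : 0 < Q) by (unfold Q; apply Rdiv_lt_0_compat; [apply Rdiv_lt_0_compat|]; lra).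
  set (eps := Q / (A + 1)).
  assert (0 < eps) by (unfold eps; apply Rdiv_lt_0_compat; lra).
  assert (Heps : A * eps <= Q).
  { unfold eps. apply Rmult_le_reg_r with (A + 1); [lra|].
    unfold Rdiv. rewrite Rmult_assoc, Rmult_assoc, Rinv_l by lra. nra. }
  destruct (H (Rmax (1 / 2) (1 - eps)) ltac:(apply Rmax_lub_lt; lra)) as [g [x [Hg HE]]].
  assert (1 / 2 <= Rmax (1 / 2) (1 - eps)) by apply Rmax_l.
  assert (1 - eps <= Rmax (1 / 2) (1 - eps)) by apply Rmax_r.
  exists x. apply (E_full_flat_at g); [lra | exact HE |].
  fold A Q. apply Rle_trans with (A * eps); [apply Rmult_le_compat_l|]; lra.
Qed.


End BoundedDerivative.

(** * Flatness everywhere *)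

Section Spreading.

Variables (b : nat) (psi df : R -> R) (C : R).
Hypothesis hb : (2 <= b)%nat.
Hypothesis hper : Zperiodic psi.
Hypothesis hder : forall x, derivable_pt_lim psi x (df x).
Hypothesis hdcont : continuity df.

Lemma flat_at_rescale m N x j :
  flat_at b df C (m + N) x -> flat_at b df C N ((x + INR j) / INR b ^ m).
Proof.
  intros Hx K K'. assert (H1 := INR_gt_1 b hb).
  specialize (Hx (j + b ^ m * K)%nat (j + b ^ m * K')%nat).
  rewrite !(dS_word_split b psi), pow1 in Hx by auto.
  set (A := dS_word b df 1 N ((x + INR j) / INR b ^ m) K) in *.
  set (A' := dS_word b df 1 N ((x + INR j) / INR b ^ m) K') in *.
  assert (Hbm : 0 < INR b ^ m) by (apply pow_lt; lra).
  assert (HbN : 0 < INR b ^ N) by (apply pow_lt; lra).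
  replace (dS_word b df 1 m x j + 1 / INR b ^ m * A - (dS_word b df 1 m x j + 1 / INR b ^ m * A'))
    with (/ INR b ^ m * (A - A')) in Hx by (field; lra).
  rewrite Rabs_mult, (Rabs_pos_eq (/ INR b ^ m)), pow_add in Hx
    by (left; apply Rinv_0_lt_compat; lra).
  apply Rmult_le_reg_l with (/ INR b ^ m); [apply Rinv_0_lt_compat; lra|].
  replace (/ INR b ^ m * (C / INR b ^ N)) with (C / (INR b ^ m * INR b ^ N)) by (field; lra).
  exact Hx.
Qed.

Lemma flat_at_sub_nat N x p : flat_at b df C N x -> flat_at b df C N (x - INR p).
Proof.
  assert (Hsub1 : forall z K, dS_word b df 1 N (z - 1) K = dS_word b df 1 N z (K + b ^ N - 1)).
  { intros z K. rewrite <- (dS_word_add_mul b psi df hb hper hder 1 N (z - 1) K 1).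
    assert (b ^ N <> 0)%nat by (apply Nat.pow_nonzero; lia).
    replace (K + b ^ N * 1)%nat with (S (K + b ^ N - 1)) by lia.
    rewrite <- dS_word_shift. replace (z - 1 + 1) with z by ring. auto. }
  intros Hx. induction p as [|p IH].
  - simpl. rewrite Rminus_0_r. auto.
  - rewrite S_INR. replace (x - (INR p + 1)) with ((x - INR p) - 1) by ring.
    intros K K'. rewrite !Hsub1. apply IH.
Qed.

(* Points [(x + j) / b ^ m - p] are dense, and [flat_at] is a closed condition. *)
Lemma flat_at_everywhere :
  (forall N, exists x, flat_at b df C N x) -> forall N x, flat_at b df C N x.
Proof.
  intros H N x J J'. assert (H1 := INR_gt_1 b hb).
  apply (Rabs_le_of_approx (fun z => dS_word b df 1 N z J - dS_word b df 1 N z J')).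
  { apply continuity_pt_filterlim.
    apply (continuous_minus (fun z => dS_word b df 1 N z J));
      apply (dS_word_continuous b df); auto. }
  intros eps Heps.
  destruct (exists_inv_pow_lt (INR b) eps H1 Heps) as [m Hm].
  destruct (H (m + N)%nat) as [x' Hx'].
  destruct (exists_nat_lattice_close x' x (INR b ^ m) ltac:(apply pow_lt; lra))
    as [j [p Hjp]].
  exists ((x' + INR j) / INR b ^ m - INR p). split; [lra|].
  apply flat_at_sub_nat, flat_at_rescale, Hx'.
Qed.

End Spreading.

(** * The coboundary *)

Definition transfer_term (b : nat) (psi : R -> R) (x : R) (n : nat) : R :=
  psi (x / INR b ^ S n) - psi 0.

(* The candidate transfer function [F] with [psi = F (b .) - F] (once [psi 0 = 0]). *)
Definition transfer (b : nat) (psi : R -> R) (x : R) : R := Series (transfer_term b psi x).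

Section Coboundary.

Variables (b : nat) (psi df : R -> R) (M C : R).
Hypothesis hb : (2 <= b)%nat.
Hypothesis hper : Zperiodic psi.
Hypothesis hder : forall x, derivable_pt_lim psi x (df x).
Hypothesis hM : forall x, Rabs (df x) <= M.
Hypothesis hflat :
  forall N x, Rabs (dS_word b df 1 N x 1 - dS_word b df 1 N x 0) <= C / INR b ^ N.

Let F := transfer b psi.

Lemma transfer_term_sub_le x y n :
  Rabs (transfer_term b psi x n - transfer_term b psi y n) <= M * Rabs (x - y) / INR b ^ S n.
Proof.
  unfold transfer_term.
  replace (psi (x / INR b ^ S n) - psi 0 - (psi (y / INR b ^ S n) - psi 0))
    with (psi ((x + 0) / INR b ^ S n) - psi ((y + 0) / INR b ^ S n))
    by (rewrite !Rplus_0_r; ring).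
  apply (Rabs_psi_rescaled_sub_le b psi df); auto.
Qed.

Lemma transfer_term_increment_sub_le x y n :
  Rabs ((transfer_term b psi (y + 1) n - transfer_term b psi y n) -
        (transfer_term b psi (x + 1) n - transfer_term b psi x n)) <=
  2 * M * Rabs (y - x) / INR b ^ S n.
Proof.
  set (u := transfer_term b psi).
  replace ((u (y + 1) n - u y n) - (u (x + 1) n - u x n))
    with ((u (y + 1) n - u (x + 1) n) - (u y n - u x n)) by ring.
  eapply Rle_trans; [apply Rabs_triang|]. rewrite Rabs_Ropp.
  assert (Q1 := transfer_term_sub_le (y + 1) (x + 1) n).
  assert (Q2 := transfer_term_sub_le y x n).
  replace (y + 1 - (x + 1)) with (y - x) in Q1 by ring.
  assert (INR b ^ S n <> 0) by (apply pow_nonzero; generalize (INR_gt_1 b hb); lra).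
  replace (2 * M * Rabs (y - x) / INR b ^ S n)
    with (M * Rabs (y - x) / INR b ^ S n + M * Rabs (y - x) / INR b ^ S n) by (field; auto).
  unfold u. lra.
Qed.

Lemma transfer_sum x : infinite_sum (transfer_term b psi x) (F x).
Proof.
  assert (H1 := INR_gt_1 b hb).
  apply is_series_Reals, Series_correct.
  apply (@ex_series_le R_AbsRing R_CompleteNormedModule _
           (fun n => scal (M * Rabs x / INR b) ((/ INR b) ^ n))).
  - intros n. change (norm (transfer_term b psi x n)) with (Rabs (transfer_term b psi x n)).
    replace (transfer_term b psi x n) with (transfer_term b psi x n - transfer_term b psi 0 n)
      by (unfold transfer_term, Rdiv; rewrite Rmult_0_l; ring).
    eapply Rle_trans; [apply transfer_term_sub_le|].
    change (scal (M * Rabs x / INR b) ((/ INR b) ^ n)) with (M * Rabs x / INR b * (/ INR b) ^ n).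
    rewrite pow_inv, Rminus_0_r.
    assert (INR b ^ n <> 0) by (apply pow_nonzero; lra).
    right. simpl pow. field. split; lra.
  - apply (@ex_series_scal_l R_AbsRing R_NormedModule).
    exists (/ (1 - / INR b)). apply is_series_geom.
    rewrite Rabs_pos_eq by (left; apply Rinv_0_lt_compat; lra).
    rewrite <- Rinv_1. apply Rinv_lt_contravar; lra.
Qed.

Lemma transfer_dilate x : F (INR b * x) = psi x - psi 0 + F x.
Proof.
  assert (H1 := INR_gt_1 b hb).
  unfold F, transfer.
  rewrite Series_incr_1
    by (exists (F (INR b * x)); apply is_series_Reals, transfer_sum).
  f_equal.
  - unfold transfer_term. simpl. do 2 f_equal. field. lra.
  - apply Series_ext. intros n. unfold transfer_term. do 2 f_equal.
    assert (INR b ^ n <> 0) by (apply pow_nonzero; lra). simpl. field. split; lra.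
Qed.

Lemma transfer_lipschitz x y : Rabs (F x - F y) <= M / (INR b - 1) * Rabs (x - y).
Proof.
  assert (H1 := INR_gt_1 b hb).
  assert (Hs := infinite_sum_minus _ _ _ _ (transfer_sum x) (transfer_sum y)).
  assert (Ht := infinite_sum_tail_le _ (INR b) (M * Rabs (x - y)) H1
                  (transfer_term_sub_le x y) _ 0 Hs).
  simpl psum in Ht. simpl pow in Ht. rewrite Rminus_0_r in Ht.
  replace (M / (INR b - 1) * Rabs (x - y)) with (M * Rabs (x - y) / (INR b - 1) / 1)
    by (field; lra).
  exact Ht.
Qed.

(* Up to [N] terms, [F (. + 1) - F] is a difference of partial sums whose derivative is
   [dS_word 1 - dS_word 0]; the remaining tail is [O(b ^ -N)]. *)
Lemma transfer_increment_const x y : F (y + 1) - F y = F (x + 1) - F x.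
Proof.
  assert (H1 := INR_gt_1 b hb).
  apply Rminus_diag_uniq.
  apply (eq_0_of_le_geom _ ((C + 2 * M / (INR b - 1)) * Rabs (y - x)) (INR b) H1).
  intros N.
  set (u := transfer_term b psi).
  set (t := fun n => (u (y + 1) n - u y n) - (u (x + 1) n - u x n)).
  assert (Hs : infinite_sum t ((F (y + 1) - F y) - (F (x + 1) - F x)))
    by (repeat apply infinite_sum_minus; apply transfer_sum).
  assert (Htb := transfer_term_increment_sub_le x y).
  assert (Ht := infinite_sum_tail_le t _ _ H1 Htb _ N Hs).
  set (h := fun z =>
    S_partial b psi 1 N (fun _ => INR 1) z - S_partial b psi 1 N (fun _ => INR 0) z).
  assert (Hpt : psum t N = h y - h x).
  { unfold h, t, u, transfer_term, S_partial. rewrite <- !psum_minus. apply psum_ext.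
    intros n _. rewrite pow1. simpl INR. rewrite !Rplus_0_r. ring. }
  assert (Hh : Rabs (h y - h x) <= C / INR b ^ N * Rabs (y - x)).
  { apply (Rabs_sub_le_of_deriv_le h (fun z => dS_word b df 1 N z 1 - dS_word b df 1 N z 0));
      [|apply hflat].
    intros z. apply derivable_pt_lim_minus; apply (S_partial_deriv b psi df); auto. }
  rewrite Hpt in Ht.
  set (d := F (y + 1) - F y - (F (x + 1) - F x)) in *.
  replace d with ((d - (h y - h x)) + (h y - h x)) by ring.
  eapply Rle_trans; [apply Rabs_triang|].
  assert (INR b ^ N <> 0) by (apply pow_nonzero; lra).
  replace ((C + 2 * M / (INR b - 1)) * Rabs (y - x) / INR b ^ N) with
    (2 * M * Rabs (y - x) / (INR b - 1) / INR b ^ N + C / INR b ^ N * Rabs (y - x))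
    by (field; lra).
  lra.
Qed.

(* A constant increment [a = F (x + 1) - F x] would give [F b - F 0 = b a] by iteration
   but [F b - F 0 = F 1 - F 0 = a] by dilation. *)
Lemma transfer_periodic : Zperiodic F.
Proof.
  assert (H1 := INR_gt_1 b hb).
  set (a := F (0 + 1) - F 0).
  assert (Fsh : forall x, F (x + 1) = F x + a)
    by (intros x; unfold a; rewrite <- (transfer_increment_const 0 x); ring).
  assert (Fn : forall n x, F (x + INR n) = F x + INR n * a).
  { induction n as [|n IH]; intros x; [simpl; rewrite Rplus_0_r; ring|].
    rewrite S_INR. replace (x + (INR n + 1)) with ((x + INR n) + 1) by ring.
    rewrite Fsh, IH. ring. }
  assert (Ha : a = 0).
  { assert (E1 := transfer_dilate 1). assert (E0 := transfer_dilate 0).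
    rewrite Rmult_1_r in E1. rewrite Rmult_0_r in E0.
    assert (Fb := Fn b 0). rewrite Rplus_0_l in Fb.
    assert (F1 := Fsh 0). rewrite Rplus_0_l in F1.
    assert (P1 := hper 0). rewrite Rplus_0_l in P1.
    fold F in E1, E0. rewrite Fb, F1, P1 in E1.
    assert ((INR b - 1) * a = 0) by lra.
    destruct (Rmult_integral _ _ H); lra. }
  intros x. rewrite Fsh, Ha. ring.
Qed.

Lemma cohom_zero_of_flat : RInt psi 0 1 = 0 -> cohom_zero b psi.
Proof.
  intros Hint. assert (H1 := INR_gt_1 b hb).
  assert (HM0 : 0 <= M) by (generalize (hM 0) (Rabs_pos (df 0)); lra).
  assert (Fcont : continuity F)
    by (apply (lipschitz_continuity F (M / (INR b - 1))); [apply Rdiv_le_0_compat; lra|];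
        apply transfer_lipschitz).
  assert (Fc : forall z, continuous F z) by (intros; apply continuity_pt_filterlim, Fcont).
  assert (Fbc : forall z, continuous (fun y => F (INR b * y)) z).
  { intros z. apply (continuous_comp (fun y => INR b * y) F); [|apply Fc].
    assert (Hx : ex_derive (fun y => INR b * y) z) by (auto_derive; auto).
    exact (ex_derive_continuous _ _ Hx). }
  assert (Hpsi0 : psi 0 = 0).
  { assert (Hpt : forall y, psi y = F (INR b * y) - F y + psi 0)
      by (intros; rewrite transfer_dilate; ring).
    rewrite (RInt_ext psi (fun y => (F (INR b * y) - F y) + psi 0)) in Hint
      by (intros; apply Hpt).
    assert (Hex : forall f, (forall z, continuous f z) -> ex_RInt f 0 1)
      by (intros; apply ex_RInt_of_continuous; auto).
    assert (Hsplit : RInt (fun y => (F (INR b * y) - F y) + psi 0) 0 1 =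
                     (RInt (fun y => F (INR b * y)) 0 1 - RInt F 0 1) + RInt (fun _ => psi 0) 0 1).
    { etransitivity.
      - exact (RInt_plus _ _ 0 1 (Hex _ (fun z => continuous_minus _ _ z (Fbc z) (Fc z)))
                 (ex_RInt_const 0 1 (psi 0))).
      - change (plus ?a ?c) with (a + c). f_equal.
        exact (RInt_minus _ _ 0 1 (Hex _ Fbc) (Hex _ Fc)). }
    rewrite Hsplit, RInt_periodic_dilate, RInt_const in Hint
      by (auto using transfer_periodic; lia).
    change (scal (1 - 0) (psi 0)) with ((1 - 0) * psi 0) in Hint.
    lra. }
  exists F. split; [|split]; auto using transfer_periodic.
  intros x. rewrite transfer_dilate, Hpsi0. ring.
Qed.

End Coboundary.

Theorem lemma2p7 (b : nat) (psi : R -> R)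
  (hb : (2 <= b)%nat)
  (hper : Zperiodic psi)
  (hC1 : isC1 psi)
  (hcoh : ~ cohom_zero b psi)
  (hint : exists pr : Riemann_integrable psi 0 1, RiemannInt pr = 0) :
  exists gamma1 : R, 0 < gamma1 < 1 /\
  exists N : nat, (0 < N)%nat /\
    forall gamma : R, gamma1 < gamma < 1 -> / INR b < gamma ->
      forall x : R, ~ E_full b gamma psi N x.
Proof.
  destruct hC1 as [df [hder hdcont]].
  destruct hint as [pr Hpr].
  assert (Hint : RInt psi 0 1 = 0) by (rewrite (RInt_Reals psi 0 1 pr); auto).
  destruct (periodic_continuous_bounded df (deriv_periodic psi df hper hder) hdcont)
    as [M [HM0 hM]].
  assert (HK : 0 <= 3 * (M / (INR b - 1))).
  { generalize (INR_gt_1 b hb); intros. apply Rmult_le_pos, Rdiv_le_0_compat; lra. }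
  apply NNPP. intros Hno. apply hcoh.
  apply (cohom_zero_of_flat b psi df M (3 * (M / (INR b - 1)))); auto.
  intros N x. apply (flat_at_everywhere b psi df); auto. clear N x.
  intros [|N].
  - exists 0. apply flat_at_O, HK.
  - apply (flat_at_of_E_full_near_one b psi df M); auto.
    intros g1 Hg1. apply NNPP. intros Hn. apply Hno.
    exists (Rmax (1 / 2) g1). split.
    { split; [apply Rlt_le_trans with (1 / 2); [lra | apply Rmax_l]|].
      apply Rmax_lub_lt; lra. }
    exists (S N). split; [lia|].
    intros g Hg _ x HE. apply Hn. exists g, x. split; [|exact HE].
    split; [apply Rle_lt_trans with (Rmax (1 / 2) g1); [apply Rmax_r|]|]; lra.
Qed.
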